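(* Let $n$ be a power of two, $\Delta=50+1000\log n$, and let $X$ be uniformly random over $\{0,1\}^n$. Then with probability at least $1/2$, every segment $z^X_i$ ($i=1,\dots,\ell_X$) of the marker segmentation of $X$ has length at most $\Delta$.
   Context: Logarithms are base $2$. Marker segmentation of $x\in\{0,1\}^n$: split $x$ into consecutive substrings $z^x_1,\dots,z^x_{\ell_x}$ by cutting immediately after each occurrence of the marker $0011$; every segment except possibly the last ends with $0011$ and contains exactly one occurrence of $0011$, and the last segment is the (possibly marker-free) remainder if nonempty. *)

From mathcomp Require Import all_boot all_order all_algebra.
Set Implicit Arguments. Unset Strict Implicit. Unset Printing Implicit Defensive.

(* The marker 0011 (false = 0, true = 1). *)
Definition marker : seq bool := [:: false; false; true; true].

Definition marker_at (s : seq bool) (j : nat) : bool :=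
  take 4 (drop j s) == marker.

(* Marker segmentation: cut immediately after each occurrence of 0011
   (scanning left to right; occurrences of 0011 cannot overlap).
   The fuel argument is only for termination; [marker_segments] uses
   fuel = size s, which is always enough. *)
Fixpoint segs_aux (fuel : nat) (s : seq bool) : seq (seq bool) :=
  match fuel with
  | 0 => if s is [::] then [::] else [:: s]
  | fuel'.+1 =>
      let i := find (marker_at s) (iota 0 (size s)) in
      if i < size s then take (i + 4) s :: segs_aux fuel' (drop (i + 4) s)
      else if s is [::] then [::] else [:: s]
  end.

Definition marker_segments (s : seq bool) : seq (seq bool) :=
  segs_aux (size s) s.

Definition short_segments (Delta : nat) (s : seq bool) : bool :=
  all (fun z => size z <= Delta) (marker_segments s).

Example seg_ex1 :
  marker_segments [:: true; false; false; true; true; false; true; false; false; true; true; true]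
  = [:: [:: true; false; false; true; true]; [:: false; true; false; false; true; true]; [:: true]].
Proof. by []. Qed.
Example seg_ex2 : marker_segments [:: false; false; true; true] = [:: [:: false; false; true; true]].
Proof. by []. Qed.

From mathcomp Require Import all_boot all_order all_algebra.
From mathcomp Require Import zify lra.

Set Implicit Arguments.
Unset Strict Implicit.
Unset Printing Implicit Defensive.

(* A segment longer than Delta contains a window of Delta positions in which
   no marker starts; in particular the m = 12 + 250 log n aligned 4-bit blocks
   of that window all differ from 0011.  For a uniformly random string this
   happens with probability (15/16)^m for each of the fewer than n window
   positions, and n (15/16)^m <= 1/2 because m >= 16 (log n + 1) and
   2 (15/16)^16 <= 1. *)

Fixpoint bitseqs (n : nat) : seq (seq bool) :=
  if n is n'.+1 then map (cons false) (bitseqs n') ++ map (cons true) (bitseqs n')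
  else [:: [::]].

Lemma cons_inj (T : Type) (x : T) : injective (cons x).
Proof. by move=> s t []. Qed.

Lemma mem_map_cons (T : eqType) (x y : T) s l :
  (x :: s \in map (cons y) l) = (x == y) && (s \in l).
Proof.
by case: eqP => [->|neq_xy]; [rewrite (mem_map (@cons_inj _ _)) | apply/mapP => -[t _ [/neq_xy]]].
Qed.

Lemma mem_bitseqs n s : (s \in bitseqs n) = (size s == n).
Proof.
elim: n s => [|n IHn] [|b s] //=; rewrite mem_cat ?mem_map_cons ?IHn //.
- by apply/orP => -[] /mapP[].
- by case: b; rewrite ?orbF.
Qed.

Lemma uniq_bitseqs n : uniq (bitseqs n).
Proof.
elim: n => //= n IHn.
rewrite cat_uniq !map_inj_uniq ?IHn ?andbT //=; try exact: cons_inj.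
by apply/hasPn => _ /mapP[s _ ->]; rewrite mem_map_cons.
Qed.

Lemma size_bitseqs n : size (bitseqs n) = 2 ^ n.
Proof. by elim: n => //= n IHn; rewrite size_cat !size_map IHn expnS mul2n addnn. Qed.

Lemma card_tuple_count n (P : pred (seq bool)) :
  #|[set x : n.-tuple bool | P x]| = count P (bitseqs n).
Proof.
rewrite cardsE cardE /enum_mem size_filter -enumT.
rewrite (@eq_count _ _ (preim val P)) // -count_map; apply/permP/uniq_perm.
- by rewrite map_inj_uniq ?enum_uniq //; apply: val_inj.
- exact: uniq_bitseqs.
move=> s; rewrite mem_bitseqs; apply/mapP/eqP => [[x _ ->]|sn].
  exact: size_tuple.
by exists (Tuple (introT eqP sn)); rewrite ?mem_enum.
Qed.

Lemma count_bitseqs_cat a b (P Q R : pred (seq bool)) :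
  (forall s, R s = P (take a s) && Q (drop a s)) ->
  count R (bitseqs (a + b)) = count P (bitseqs a) * count Q (bitseqs b).
Proof.
elim: a P R => [|a IHa] P R /= eqR.
  rewrite (@eq_count _ _ (fun s => P [::] && Q s)) => [|s]; last by rewrite eqR take0 drop0.
  by case: (P [::]); rewrite ?count_pred0 // mul1n.
rewrite !count_cat !count_map mulnDl.
by congr (_ + _); apply: IHa => s; rewrite /= eqR.
Qed.

Fixpoint blocks_avoid_marker (m : nat) (s : seq bool) : bool :=
  if m is m'.+1 then (take 4 s != marker) && blocks_avoid_marker m' (drop 4 s)
  else true.

Lemma count_blocks_avoid_marker m :
  count (blocks_avoid_marker m) (bitseqs (4 * m)) = 15 ^ m.
Proof.
elim: m => // m IHm; rewrite mulnS expnS -IHm.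
exact: (@count_bitseqs_cat 4 _ (predC1 marker)).
Qed.

Lemma blocks_avoid_marker_intro m s :
  (forall b, b < m -> take 4 (drop (4 * b) s) != marker) -> blocks_avoid_marker m s.
Proof.
elim: m s => //= m IHm s avoid; apply/andP; split.
  by have := avoid 0 isT; rewrite muln0 drop0.
by apply: IHm => b ltbm; rewrite drop_drop -mulnSr; apply: avoid.
Qed.

Definition marker_free_window (m p : nat) (s : seq bool) : bool :=
  blocks_avoid_marker m (take (4 * m) (drop p s)).

Lemma count_marker_free_window n m p : p + 4 * m <= n ->
  count (marker_free_window m p) (bitseqs n) = 15 ^ m * 2 ^ (n - 4 * m).
Proof.
move=> window_in; have -> : n = p + (4 * m + (n - p - 4 * m)) by lia.
rewrite (@count_bitseqs_cat _ _ predT (fun t => blocks_avoid_marker m (take (4 * m) t))) //.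
rewrite (@count_bitseqs_cat _ _ (blocks_avoid_marker m) predT) => [|t]; last by rewrite andbT.
rewrite !count_predT !size_bitseqs count_blocks_avoid_marker mulnCA -expnD.
by congr (_ * 2 ^ _); lia.
Qed.

Lemma before_find_iota (a : pred nat) n j : j < find a (iota 0 n) -> ~~ a j.
Proof.
move=> before; have ltjn : j < n.
  by apply: leq_trans before _; rewrite -[n in _ <= n](size_iota 0) find_size.
by have := before_find 0 before; rewrite nth_iota // add0n => ->.
Qed.

Lemma marker_at_drop s i j : marker_at (drop i s) j = marker_at s (i + j).
Proof. by rewrite /marker_at drop_drop addnC. Qed.

Lemma long_segment_window fuel s z D :
  size s <= fuel -> z \in segs_aux fuel s -> D < size z ->
  exists2 p, p + D < size s & forall j, j + 4 <= D -> ~~ marker_at s (p + j).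
Proof.
elim: fuel s => [|fuel IHfuel] s; first by rewrite leqn0 => /nilP ->.
move=> size_s /=; set i := find _ _.
have no_marker_before j : j < i -> ~~ marker_at s j by apply: before_find_iota.
case: ifP => [_ | /negbT]; last first.
  rewrite -leqNgt => gei in_last; have -> : z = s.
    by move: in_last; case: (s) => //= b t; rewrite inE => /eqP.
  move=> long; exists 0 => // j ltjD.
  by apply: no_marker_before; rewrite add0n; lia.
rewrite inE => /orP[/eqP -> | in_rest] long.
  exists 0 => [|j ltjD]; first by apply: leq_trans long _; rewrite size_take_min geq_minr.
  by apply: no_marker_before; move: long; rewrite size_take_min; lia.
have [|p ltpD no_marker] := IHfuel _ _ in_rest long; first by rewrite size_drop; lia.
exists (i + 4 + p) => [|j ltjD]; first by move: ltpD; rewrite size_drop; lia.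
by rewrite -addnA -marker_at_drop; apply: no_marker.
Qed.

Lemma long_segment_marker_free_window D m s : 4 * m <= D -> ~~ short_segments D s ->
  exists2 p, p + D < size s & marker_free_window m p s.
Proof.
move=> le4mD /allPn[z z_seg]; rewrite -ltnNge => long.
have [p ltpD no_marker] := long_segment_window (leqnn _) z_seg long.
exists p => //; apply: blocks_avoid_marker_intro => b ltbm.
have -> : 4 * m = 4 * m - 4 * b + 4 * b by lia.
rewrite -take_drop take_takel; last by lia.
rewrite drop_drop addnC; apply: no_marker; lia.
Qed.

Lemma sub_in_count (T : eqType) (a1 a2 : pred T) s :
  {in s, subpred a1 a2} -> count a1 s <= count a2 s.
Proof.
move=> sub12; rewrite (@eq_in_count _ a1 (predI a1 a2)) => [|x /sub12/andb_idr //].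
by apply: sub_count => x /andP[].
Qed.

Lemma count_predU_le (T : Type) (a1 a2 : pred T) s :
  count (predU a1 a2) s <= count a1 s + count a2 s.
Proof. by rewrite -count_predUI leq_addr. Qed.

Lemma count_has_le (I : eqType) (T : Type) (F : I -> pred T) r s c :
  {in r, forall i, count (F i) s <= c} ->
  count (fun x => has (F^~ x) r) s <= size r * c.
Proof.
elim: r => [|i r IHr] bound /=; first by rewrite count_pred0.
rewrite (@eq_count _ _ (predU (F i) (fun x => has (F^~ x) r))) //.
apply: leq_trans (count_predU_le _ _ _) _; rewrite mulSn leq_add ?bound ?mem_head //.
by apply: IHr => j rj; apply: bound; rewrite inE rj orbT.
Qed.

Lemma count_long_segments n D m : 4 * m <= D ->
  count (predC (short_segments D)) (bitseqs n) <= (n - D) * (15 ^ m * 2 ^ (n - 4 * m)).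
Proof.
move=> le4mD.
apply: (@leq_trans (count (fun s => has (marker_free_window m ^~ s) (iota 0 (n - D))) (bitseqs n))).
  apply: sub_in_count => s; rewrite mem_bitseqs => /eqP size_s.
  case/(long_segment_marker_free_window le4mD) => p ltpD window.
  by apply/hasP; exists p; rewrite // mem_iota; move: ltpD; rewrite size_s; lia.
rewrite -[X in _ <= X * _](size_iota 0 (n - D)); apply: count_has_le => p; rewrite mem_iota => ltp.
by rewrite count_marker_free_window //; lia.
Qed.

Lemma leq_exp_base m n e : m <= n -> m ^ e <= n ^ e.
Proof. by move=> lemn; elim: e => // e IHe; rewrite !expnS leq_mul. Qed.

Lemma expn2_mul_expn15_le j m : 16 * j <= m -> 2 ^ j * 15 ^ m <= 16 ^ m.
Proof.
move=> le16jm; rewrite -(subnKC le16jm) !(expnD _ (16 * j)) mulnA.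
apply: leq_mul (leq_exp_base _ _) => //; rewrite !expnM -expnMn.
by apply: leq_exp_base; lia.
Qed.

Lemma window_union_bound k :
  2 * ((2 ^ k - (50 + 1000 * k)) * (15 ^ (12 + 250 * k) * 2 ^ (2 ^ k - 4 * (12 + 250 * k))))
  <= 2 ^ 2 ^ k.
Proof.
have [|ltDn] := leqP (2 ^ k) (50 + 1000 * k); first by rewrite -subn_eq0 => /eqP ->.
have k_gt0 : 0 < k by case: k ltDn.
have le16km : 16 * k.+1 <= 12 + 250 * k by lia.
have le4mn : 4 * (12 + 250 * k) <= 2 ^ k by lia.
set m := 12 + 250 * k in le16km le4mn *.
have -> : 2 ^ 2 ^ k = 16 ^ m * 2 ^ (2 ^ k - 4 * m) by rewrite -(expnM 2 4) -expnD subnKC.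
rewrite mulnA mulnA leq_mul2r; apply/orP; right.
apply: leq_trans (expn2_mul_expn15_le le16km); rewrite expnS leq_mul2r.
by apply/orP; right; rewrite leq_mul2l leq_subr orbT.
Qed.

Lemma count_short_segments_ge k :
  2 ^ 2 ^ k <= 2 * count (short_segments (50 + 1000 * k)) (bitseqs (2 ^ k)).
Proof.
have total := count_predC (short_segments (50 + 1000 * k)) (bitseqs (2 ^ k)).
have le4mD : 4 * (12 + 250 * k) <= 50 + 1000 * k by lia.
have bad := count_long_segments (2 ^ k) le4mD.
have := window_union_bound k; rewrite size_bitseqs in total; lia.
Qed.

Import GRing.Theory Num.Theory.
Local Open Scope ring_scope.

Theorem lemma6 (k : nat) :
  (1 / 2 : rat) <=
    (#|[set x : (2 ^ k)%N.-tuple bool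
          | short_segments (50 + 1000 * k)%N x]|)%:R / (2 ^ (2 ^ k))%N%:R.
Proof.
rewrite card_tuple_count ler_pdivlMr ?ltr0n ?expn_gt0 //.
have := count_short_segments_ge k; rewrite -(ler_nat rat) natrM; lra.
Qed.
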